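(* The category $\mathsf{Ab}(\mathsf{PreOrdGrp})$ of internal abelian groups in $\mathsf{PreOrdGrp}$ is isomorphic to the category $\mathsf{Mono}(\mathsf{Ab})$ of monomorphisms in the category $\mathsf{Ab}$ of abelian groups (objects: injective homomorphisms of abelian groups; morphisms: commutative squares).
   Context: A preordered group is a pair $(G,P_G)$ with $G$ an additively written group and $P_G\subseteq G$ a submonoid closed under conjugation; morphisms $(G,P_G)\to(H,P_H)$ are group homomorphisms $f$ with $f(P_G)\subseteq P_H$. This is the category $\mathsf{PreOrdGrp}$ (finite products are $(G\times H,P_G\times P_H)$). $\mathsf{Ab}(\mathsf{PreOrdGrp})$ is the category of internal abelian group objects in $\mathsf{PreOrdGrp}$ with internal homomorphisms. *)

From mathcomp Require Import all_boot all_algebra.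
Set Implicit Arguments. Unset Strict Implicit. Unset Printing Implicit Defensive.
Import GRing.Theory.
Local Open Scope ring_scope.

Record catData := CatData {
  Ob : Type;
  Hom : Ob -> Ob -> Type;
  cid : forall x, Hom x x;
  ccomp : forall x y z, Hom y z -> Hom x y -> Hom x z }.
Arguments cid {c} x.
Arguments ccomp {c x y z} _ _.

Record functor (C D : catData) := Functor {
  fobj : Ob C -> Ob D;
  fmap : forall a b, Hom a b -> Hom (fobj a) (fobj b);
  fmap_id : forall a, fmap (cid a) = cid (fobj a);
  fmap_comp : forall a b c (g : Hom b c) (f : Hom a b),
      fmap (ccomp g f) = ccomp (fmap g) (fmap f) }.
Arguments fmap {C D} _ {a b} _.

Definition cat_iso (C : catData) (a b : Ob C) : Prop :=
  exists (f : Hom a b) (g : Hom b a), ccomp g f = cid a /\ ccomp f g = cid b.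

Definition cat_equivalent (C D : catData) : Prop :=
  exists F : functor C D,
    (forall a b, bijective (@fmap C D F a b)) /\
    (forall d, exists c, cat_iso (fobj F c) d).

(* A (not necessarily abelian) additively written group G together with
   P_G ⊆ G a submonoid closed under conjugation. *)
Record preOrdGrp := PreOrdGrp {
  pog_car : Type;
  pog_add : pog_car -> pog_car -> pog_car;
  pog_zero : pog_car;
  pog_opp : pog_car -> pog_car;
  pog_addA : forall x y z, pog_add x (pog_add y z) = pog_add (pog_add x y) z;
  pog_add0l : forall x, pog_add pog_zero x = x;
  pog_add0r : forall x, pog_add x pog_zero = x;
  pog_addNl : forall x, pog_add (pog_opp x) x = pog_zero;
  pog_addNr : forall x, pog_add x (pog_opp x) = pog_zero;
  pog_pos : pog_car -> Prop;
  pog_pos0 : pog_pos pog_zero;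
  pog_posD : forall x y, pog_pos x -> pog_pos y -> pog_pos (pog_add x y);
  pog_posJ : forall g x, pog_pos x ->
      pog_pos (pog_add (pog_add g x) (pog_opp g)) }.

Arguments pog_add : clear implicits.
Arguments pog_zero : clear implicits.
Arguments pog_opp : clear implicits.
Arguments pog_pos : clear implicits.

Record pog_hom (G H : preOrdGrp) := PogHom {
  pog_fun :> pog_car G -> pog_car H;
  pog_funD : forall x y, pog_fun (pog_add G x y) = pog_add H (pog_fun x) (pog_fun y);
  pog_funP : forall x, pog_pos G x -> pog_pos H (pog_fun x) }.

Definition pog_prod (G H : preOrdGrp) : preOrdGrp.
Proof.
refine (@PreOrdGrp (pog_car G * pog_car H)
  (fun x y => (pog_add G x.1 y.1, pog_add H x.2 y.2))
  (pog_zero G, pog_zero H)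
  (fun x => (pog_opp G x.1, pog_opp H x.2))
  _ _ _ _ _
  (fun x => pog_pos G x.1 /\ pog_pos H x.2) _ _ _).
- by move=> [? ?] [? ?] [? ?] /=; rewrite !pog_addA.
- by move=> [? ?] /=; rewrite !pog_add0l.
- by move=> [? ?] /=; rewrite !pog_add0r.
- by move=> [? ?] /=; rewrite !pog_addNl.
- by move=> [? ?] /=; rewrite !pog_addNr.
- by split; apply: pog_pos0.
- by move=> [? ?] [? ?] [? ?] [? ?]; split; apply: pog_posD.
- by move=> [? ?] [? ?] [? ?]; split; apply: pog_posJ.
Defined.

Definition pog_unit : preOrdGrp.
Proof.
refine (@PreOrdGrp unit (fun _ _ => tt) tt (fun _ => tt) _ _ _ _ _
  (fun _ => True) _ _ _); by repeat case.
Defined.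

Record abPOG := AbPOG {
  ab_obj : preOrdGrp;
  ab_m : pog_hom (pog_prod ab_obj ab_obj) ab_obj;
  ab_e : pog_hom pog_unit ab_obj;
  ab_i : pog_hom ab_obj ab_obj;
  ab_mA : forall x y z : pog_car ab_obj,
      ab_m (ab_m (x, y), z) = ab_m (x, ab_m (y, z));
  ab_m0l : forall x : pog_car ab_obj, ab_m (ab_e tt, x) = x;
  ab_mNl : forall x : pog_car ab_obj, ab_m (ab_i x, x) = ab_e tt;
  ab_mC : forall x y : pog_car ab_obj, ab_m (x, y) = ab_m (y, x) }.

Record abHom (X Y : abPOG) := AbHom {
  ah_hom :> pog_hom (ab_obj X) (ab_obj Y);
  ah_m : forall x y, ah_hom (ab_m X (x, y)) = ab_m Y (ah_hom x, ah_hom y) }.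

Definition abHom_id (X : abPOG) : abHom X X.
Proof.
by refine (@AbHom X X (@PogHom _ _ (fun x => x) (fun _ _ => erefl) (fun _ h => h)) (fun _ _ => erefl)).
Defined.

Definition pog_hom_comp (G H K : preOrdGrp) (g : pog_hom H K) (f : pog_hom G H) :
  pog_hom G K.
Proof.
refine (@PogHom G K (fun x => g (f x)) _ _).
- by move=> x y; rewrite !pog_funD.
- by move=> x Px; do 2 apply: pog_funP.
Defined.

Definition abHom_comp (X Y Z : abPOG) (g : abHom Y Z) (f : abHom X Y) : abHom X Z.
Proof.
refine (@AbHom X Z (pog_hom_comp g f) _).
by move=> x y /=; rewrite !ah_m.
Defined.

Definition AbPreOrdGrp : catData :=
  @CatData abPOG abHom abHom_id abHom_comp.

Record monoAb := MonoAb {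
  ma_dom : zmodType;
  ma_cod : zmodType;
  ma_fun : ma_dom -> ma_cod;
  ma_funD : forall x y, ma_fun (x + y) = ma_fun x + ma_fun y;
  ma_inj : injective ma_fun }.

Arguments ma_fun : clear implicits.

Record monoHom (f g : monoAb) := MonoHom {
  mh_top : ma_dom f -> ma_dom g;
  mh_bot : ma_cod f -> ma_cod g;
  mh_topD : forall x y, mh_top (x + y) = mh_top x + mh_top y;
  mh_botD : forall x y, mh_bot (x + y) = mh_bot x + mh_bot y;
  mh_sq : forall x, mh_bot (ma_fun f x) = ma_fun g (mh_top x) }.

Definition monoHom_id (f : monoAb) : monoHom f f :=
  @MonoHom f f (fun x => x) (fun x => x)
    (fun _ _ => erefl) (fun _ _ => erefl) (fun _ => erefl).

Definition monoHom_comp (f g h : monoAb) (q : monoHom g h) (p : monoHom f g) :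
  monoHom f h.
Proof.
refine (@MonoHom f h (fun x => mh_top q (mh_top p x))
                     (fun x => mh_bot q (mh_bot p x)) _ _ _).
- by move=> x y; rewrite !mh_topD.
- by move=> x y; rewrite !mh_botD.
- by move=> x; rewrite !mh_sq.
Defined.

Definition MonoAbCat : catData :=
  @CatData monoAb monoHom monoHom_id monoHom_comp.

From mathcomp Require Import all_boot all_algebra.
From HB Require Import structures.
From mathcomp Require boolp.
Set Implicit Arguments. Unset Strict Implicit. Unset Printing Implicit Defensive.
Import GRing.Theory.
Local Open Scope ring_scope.

(* By the Eckmann-Hilton argument, the internal multiplication of an abelian
   group object (G, P) of PreOrdGrp is the group law of G itself, so G is
   abelian and P, being closed under the internal inverse, is a subgroup.
   The functor sends (G, P) to the inclusion P -> G.  It is full and faithful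
   because a square between monomorphisms is determined by its bottom map,
   and the bottom map of a square sends P into P.  Every monomorphism
   f : A -> B is isomorphic to the inclusion of f(A) into B, the image of
   (B, f(A)). *)

Lemma sval_inj (T : Type) (P : T -> Prop) : injective (@sval T P).
Proof. by case=> a pa [b pb] /= eq_ab; exact: boolp.eq_exist. Qed.

Lemma pog_idem_zero (G : preOrdGrp) (e : pog_car G) :
  pog_add G e e = e -> e = pog_zero G.
Proof.
move=> /(congr1 (pog_add G (pog_opp G e))).
by rewrite pog_addA pog_addNl pog_add0l.
Qed.

Lemma pog_hom_unit_zero (G : preOrdGrp) (e : pog_hom pog_unit G) : e tt = pog_zero G.
Proof. by apply: pog_idem_zero; rewrite -(pog_funD e tt tt). Qed.

Definition ab_car (X : abPOG) : Type := pog_car (ab_obj X).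
Definition ab_cone (X : abPOG) : Type := {x : ab_car X | pog_pos (ab_obj X) x}.

Section AbelianObject.
Variable X : abPOG.
Local Notation G := (ab_obj X).

Definition ab_add (x y : ab_car X) : ab_car X := ab_m X (x, y).

Lemma ab_addE (x y : ab_car X) : ab_add x y = pog_add G x y.
Proof.
have := pog_funD (ab_m X) (x, pog_zero G) (pog_zero G, y).
rewrite /= pog_add0r pog_add0l /ab_add => ->.
by rewrite -(pog_hom_unit_zero (ab_e X)) ab_m0l ab_mC ab_m0l.
Qed.

Lemma pos_ab_add (x y : ab_car X) :
  pog_pos G x -> pog_pos G y -> pog_pos G (ab_add x y).
Proof. by move=> px py; exact: (@pog_funP _ _ (ab_m X) (x, y) (conj px py)). Qed.

Lemma pos_ab_e : pog_pos G (ab_e X tt).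
Proof. exact: pog_funP. Qed.

Lemma pos_ab_i (x : ab_car X) : pog_pos G x -> pog_pos G (ab_i X x).
Proof. exact: pog_funP. Qed.

Definition cone_add (x y : ab_cone X) : ab_cone X :=
  exist _ _ (pos_ab_add (svalP x) (svalP y)).
Definition cone_zero : ab_cone X := exist _ _ pos_ab_e.
Definition cone_opp (x : ab_cone X) : ab_cone X := exist _ _ (pos_ab_i (svalP x)).

Lemma ab_addA : associative ab_add.
Proof. by move=> x y z; rewrite /ab_add ab_mA. Qed.
Lemma ab_addC : commutative ab_add.
Proof. by move=> x y; rewrite /ab_add ab_mC. Qed.
Lemma ab_add0 : left_id (ab_e X tt) ab_add.
Proof. exact: ab_m0l. Qed.
Lemma ab_addN : left_inverse (ab_e X tt) (ab_i X) ab_add.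
Proof. exact: ab_mNl. Qed.

Lemma cone_addA : associative cone_add.
Proof. by move=> x y z; apply: sval_inj; exact: ab_addA. Qed.
Lemma cone_addC : commutative cone_add.
Proof. by move=> x y; apply: sval_inj; exact: ab_addC. Qed.
Lemma cone_add0 : left_id cone_zero cone_add.
Proof. by move=> x; apply: sval_inj; exact: ab_add0. Qed.
Lemma cone_addN : left_inverse cone_zero cone_opp cone_add.
Proof. by move=> x; apply: sval_inj; exact: ab_addN. Qed.

End AbelianObject.

(* zmodType needs a choiceType; the carriers only get the classical one. *)
HB.instance Definition _ X := boolp.gen_eqMixin (ab_car X).
HB.instance Definition _ X := boolp.gen_choiceMixin (ab_car X).
HB.instance Definition _ X :=
  GRing.isZmodule.Build (ab_car X) (@ab_addA X) (@ab_addC X) (@ab_add0 X) (@ab_addN X).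
HB.instance Definition _ X := boolp.gen_eqMixin (ab_cone X).
HB.instance Definition _ X := boolp.gen_choiceMixin (ab_cone X).
HB.instance Definition _ X :=
  GRing.isZmodule.Build (ab_cone X) (@cone_addA X) (@cone_addC X) (@cone_add0 X) (@cone_addN X).

Lemma additive_zmod_morphism (U V : zmodType) (f : U -> V) :
  {morph f : x y / x + y} -> zmod_morphism f.
Proof. by move=> fD x y; apply: (addIr (f y)); rewrite -fD !subrK. Qed.

HB.instance Definition _ (f : monoAb) :=
  GRing.isZmodMorphism.Build _ _ (ma_fun f) (additive_zmod_morphism (@ma_funD f)).

Lemma eq_abHom (X Y : abPOG) (p q : abHom X Y) : p =1 q -> p = q.
Proof.
case: p q => [[h d1 p1] m1] [[h' d2 p2] m2] /= /boolp.funext eq_h; subst h'.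
have -> := boolp.Prop_irrelevance d2 d1; have -> := boolp.Prop_irrelevance p2 p1.
by have -> := boolp.Prop_irrelevance m2 m1.
Qed.

Lemma eq_monoHom (f g : monoAb) (p q : monoHom f g) :
  mh_bot p =1 mh_bot q -> p = q.
Proof.
move=> eq_bot; have eq_top : mh_top p =1 mh_top q.
  by move=> x; apply: (@ma_inj g); rewrite -!mh_sq eq_bot.
case: p q eq_top eq_bot => t b ? ? ? [t' b' ? ? ?] /=.
move=> /boolp.funext eq_t /boolp.funext eq_b; subst t' b'.
by congr MonoHom; apply: boolp.Prop_irrelevance.
Qed.

Definition cone_mono (X : abPOG) : monoAb :=
  @MonoAb (ab_cone X) (ab_car X) sval (fun _ _ => erefl) (@sval_inj _ _).

Definition cone_monoHom (X Y : abPOG) (h : abHom X Y) :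
  monoHom (cone_mono X) (cone_mono Y).
Proof.
refine (@MonoHom (cone_mono X) (cone_mono Y)
  (fun x => exist _ (h (sval x)) (pog_funP h (svalP x))) h _ _ (fun _ => erefl)).
- by move=> x y; apply: sval_inj; exact: ah_m.
- exact: ah_m.
Defined.

Definition ConeMono : functor AbPreOrdGrp MonoAbCat.
Proof.
by refine (@Functor AbPreOrdGrp MonoAbCat cone_mono cone_monoHom _ _) => *;
  apply: eq_monoHom.
Defined.

Section SquareBottom.
Variables (X Y : abPOG) (u : monoHom (cone_mono X) (cone_mono Y)).

Lemma square_bot_add x y :
  mh_bot u (pog_add (ab_obj X) x y) = pog_add (ab_obj Y) (mh_bot u x) (mh_bot u y).
Proof. by rewrite -!ab_addE; exact: mh_botD. Qed.

Lemma square_bot_pos x :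
  pog_pos (ab_obj X) x -> pog_pos (ab_obj Y) (mh_bot u x).
Proof. by move=> px; rewrite (mh_sq u (exist _ x px)); exact: svalP. Qed.

Definition abHom_of_square : abHom X Y :=
  @AbHom X Y (PogHom square_bot_add square_bot_pos) (mh_botD u).

End SquareBottom.

Lemma ConeMono_fully_faithful (X Y : abPOG) : bijective (@fmap _ _ ConeMono X Y).
Proof.
exists (@abHom_of_square X Y) => [h | u]; first exact: eq_abHom.
exact: eq_monoHom.
Qed.

Section ImageObject.
Variable f : monoAb.
Local Notation A := (ma_dom f).
Local Notation B := (ma_cod f).
Local Notation fA := (ma_fun f).

Definition image_pos (x : B) : Prop := exists a, fA a = x.

Lemma image_pos0 : image_pos 0.
Proof. by exists 0; rewrite raddf0. Qed.

Lemma image_posD x y : image_pos x -> image_pos y -> image_pos (x + y).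
Proof. by move=> [a <-] [b <-]; exists (a + b); rewrite ma_funD. Qed.

Lemma image_posN x : image_pos x -> image_pos (- x).
Proof. by move=> [a <-]; exists (- a); rewrite raddfN. Qed.

Definition image_pog : preOrdGrp.
Proof.
refine (@PreOrdGrp B +%R 0 -%R (@addrA B) (@add0r B) (@addr0 B) (@addNr B)
  (@subrr B) image_pos image_pos0 image_posD _).
by move=> g x px; rewrite /= addrC addKr.
Defined.

Definition image_add : pog_hom (pog_prod image_pog image_pog) image_pog.
Proof.
refine (@PogHom (pog_prod image_pog image_pog) image_pog (fun p => p.1 + p.2) _ _).
- by move=> [x1 y1] [x2 y2]; exact: addrACA.
- by move=> [x y] [px py]; exact: image_posD.
Defined.

Definition image_zero : pog_hom pog_unit image_pog :=
  @PogHom pog_unit image_pog (fun _ => 0) (fun _ _ => esym (addr0 0))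
    (fun _ _ => image_pos0).

Definition image_opp : pog_hom image_pog image_pog :=
  @PogHom image_pog image_pog -%R (@opprD B) image_posN.

Definition image_abPOG : abPOG :=
  @AbPOG image_pog image_add image_zero image_opp
    (fun x y z => esym (addrA x y z)) (@add0r B) (@addNr B) (@addrC B).

Definition image_preimage (x : ab_cone image_abPOG) : A :=
  sval (boolp.constructive_indefinite_description (svalP x)).

Lemma image_preimageK (x : ab_cone image_abPOG) : fA (image_preimage x) = sval x.
Proof. exact: svalP (boolp.constructive_indefinite_description (svalP x)). Qed.

Definition cone_to_mono : monoHom (cone_mono image_abPOG) f.
Proof.
refine (@MonoHom (cone_mono image_abPOG) f image_preimage id _
  (fun _ _ => erefl) (fun x => esym (image_preimageK x))).
by move=> x y; apply: (@ma_inj f); rewrite ma_funD !image_preimageK.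
Defined.

Definition mono_to_cone : monoHom f (cone_mono image_abPOG).
Proof.
refine (@MonoHom f (cone_mono image_abPOG)
  (fun a => exist _ (fA a : ab_car image_abPOG) (ex_intro _ a erefl)) id _
  (fun _ _ => erefl) (fun _ => erefl)).
by move=> a b; apply: sval_inj; exact: ma_funD.
Defined.

Lemma cone_mono_image_iso : cat_iso (fobj ConeMono image_abPOG) f.
Proof. by exists cone_to_mono, mono_to_cone; split; apply: eq_monoHom. Qed.

End ImageObject.

Theorem corollary3p8 : cat_equivalent AbPreOrdGrp MonoAbCat.
Proof.
exists ConeMono; split; first exact: ConeMono_fully_faithful.
by move=> f; exists (image_abPOG f); exact: cone_mono_image_iso.
Qed.
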